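(* Let $\sigma,\eta>0$ and $\mathscr{C}$ be a family of balls as in the context, and assume there is $\kappa>0$ such that $|B|^{1/3}\ge\kappa|x_B|$ for all $B\in\mathscr{C}$ with $|x_B|$ sufficiently large. Then there exists $L=L(\eta,\kappa)\ge2$ such that, for every sufficiently large $n$, every $B\in\mathscr{C}$ intersecting $B(0,2n)\setminus B(0,n)$ satisfies $B\subset B(0,Ln)$ and $|x_B|\ge L^{-1}n$. In particular, for every sufficiently large $n$ there are at most $\frac{4\pi}{3}\sigma L^6\kappa^{-3}$ balls $B\in\mathscr{C}$ intersecting $B(0,2n)\setminus B(0,n)$.
   Context: Cover: for constants $\sigma,\eta>0$, $\mathscr{C}$ is a family of closed balls in $\mathbb{R}^3$ with $\bigcup_{B\in\mathscr{C}}B=\mathbb{R}^3$ and $|B|\geq 4\pi/3$ for all $B\in\mathscr{C}$, such that (i) each ball in $\mathscr{C}$ intersects at most $\sigma$ balls in $\mathscr{C}$, and (ii) if $B,B'\in\mathscr{C}$ intersect then $\eta^{-1}\le |B|^{1/3}/|B'|^{1/3}\le\eta$. $|B|$ is the volume and $x_B$ the center of $B$; $B(0,r)$ is the ball of radius $r$ centered at the origin. *)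

From Stdlib Require Import Reals List.
Open Scope R_scope.

Definition pt3 : Type := (R * R * R)%type.

Definition norm3 (p : pt3) : R :=
  let '(x, y, z) := p in sqrt (x * x + y * y + z * z).

Definition sub3 (p q : pt3) : pt3 :=
  let '(x, y, z) := p in let '(x', y', z') := q in (x - x', y - y', z - z').

Definition ball3 : Type := (pt3 * R)%type.
Definition center (B : ball3) : pt3 := fst B.
Definition radius (B : ball3) : R := snd B.

Definition in_ball (p : pt3) (B : ball3) : Prop :=
  norm3 (sub3 p (center B)) <= radius B.

Definition vol (B : ball3) : R := 4 / 3 * PI * radius B ^ 3.

Definition cbrt (x : R) : R := Rpower x (1 / 3).

Definition balls_intersect (B B' : ball3) : Prop :=
  exists p, in_ball p B /\ in_ball p B'.

Definition at_most (P : ball3 -> Prop) (N : R) : Prop :=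
  forall l : list ball3, NoDup l -> (forall B, In B l -> P B) -> INR (length l) <= N.

Definition is_cover (sigma eta : R) (C : ball3 -> Prop) : Prop :=
  (forall p : pt3, exists B, C B /\ in_ball p B) /\
  (forall B, C B -> vol B >= 4 * PI / 3) /\
  (forall B, C B -> at_most (fun B' => C B' /\ balls_intersect B B') sigma) /\
  (forall B B', C B -> C B' -> balls_intersect B B' ->
     / eta <= cbrt (vol B) / cbrt (vol B') <= eta).

Definition meets_annulus (n : R) (B : ball3) : Prop :=
  exists p, in_ball p B /\ n < norm3 p <= 2 * n.

Definition ball_subset_origin (B : ball3) (r : R) : Prop :=
  forall p, in_ball p B -> norm3 p <= r.

(* Two facts about the cover drive everything: radii of intersecting balls are
   comparable up to the factor eta, and the cover is locally finite (balls of radius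
   >= 1 meeting B(z,1) each contain a ball of radius 1/2 centred in a fixed cube;
   balls whose inner centres share a grid cell pairwise intersect, so there are at
   most 512 sigma of them).

   Let B meet B(0,2n) and suppose r_B > (4 eta^2 + 1) n.  Call a ball small if its
   radius is at most eta r_0 + 4n, where B_0 is a ball containing 0.  A ball that is
   not small and meets the segment [0, x_B] misses B_0, hence meets B, so it is
   eta-comparable to B and cannot touch a small ball.  A supremum argument along
   the segment, using local finiteness, carries "lies in a small ball" from 0 to
   x_B, so a small ball meets B: contradiction.  Hence balls meeting the annulus
   have radius O(n) and centres at distance between n/2 and O(n); the kappa
   hypothesis makes their radii at least of order kappa n, and the grid count with
   cells of that size bounds their number by sigma times a constant depending only
   on eta and kappa. *)

From Stdlib Require Import Reals List Lra Psatz ZArith Lia Classical ClassicalEpsilon.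
Open Scope R_scope.

Definition O3 : pt3 := (0, 0, 0).

Definition scal3 (t : R) (p : pt3) : pt3 :=
  let '(x, y, z) := p in (t * x, t * y, t * z).

Definition lerp3 (p q : pt3) (t : R) : pt3 :=
  let '(x, y, z) := p in let '(x', y', z') := q in
  (x + t * (x' - x), y + t * (y' - y), z + t * (z' - z)).

Definition dot3 (p q : pt3) : R :=
  let '(x, y, z) := p in let '(x', y', z') := q in x * x' + y * y' + z * z'.

Definition dist3 (p q : pt3) : R := norm3 (sub3 p q).

Ltac pt3_destruct :=
  repeat match goal with p : pt3 |- _ => destruct p as [[? ?] ?] end.

Ltac pt3_ring := pt3_destruct; simpl;
  match goal with
  | |- (_, _, _) = _ => f_equal; [f_equal|]; ring
  | |- _ => ring
  end.

Lemma dot3_self_ge0 (p : pt3) : 0 <= dot3 p p.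
Proof. pt3_destruct; simpl; nra. Qed.

Lemma norm3_dot (p : pt3) : norm3 p = sqrt (dot3 p p).
Proof. now pt3_destruct. Qed.

Lemma norm3_ge0 (p : pt3) : 0 <= norm3 p.
Proof. rewrite norm3_dot; apply sqrt_pos. Qed.

Lemma norm3_sqr (p : pt3) : norm3 p * norm3 p = dot3 p p.
Proof. rewrite norm3_dot; apply sqrt_sqrt, dot3_self_ge0. Qed.

Lemma norm3_le_iff (p : pt3) (r : R) : 0 <= r -> norm3 p <= r <-> dot3 p p <= r * r.
Proof.
  intros hr; pose proof (norm3_ge0 p); rewrite <- norm3_sqr; split; intros h.
  - now apply Rmult_le_compat.
  - nra.
Qed.

Lemma norm3_scal3 (t : R) (p : pt3) : norm3 (scal3 t p) = Rabs t * norm3 p.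
Proof.
  rewrite !norm3_dot, <- sqrt_Rsqr_abs, <- sqrt_mult_alt by apply Rle_0_sqr.
  f_equal; unfold Rsqr; pt3_ring.
Qed.

Lemma dot3_cauchy (p q : pt3) : dot3 p q <= norm3 p * norm3 q.
Proof.
  assert (lagrange : dot3 p q * dot3 p q <= dot3 p p * dot3 q q).
  { pt3_destruct; simpl.
    match goal with |- (?a * ?a' + ?b * ?b' + ?c * ?c') * _ <= _ =>
      assert (0 <= (a * b' - b * a') ^ 2 + (a * c' - c * a') ^ 2 + (b * c' - c * b') ^ 2)
        by (apply Rplus_le_le_0_compat; [apply Rplus_le_le_0_compat|]; apply pow2_ge_0)
    end; nra. }
  assert (0 <= norm3 p * norm3 q) by (apply Rmult_le_pos; apply norm3_ge0).
  rewrite <- (norm3_sqr p), <- (norm3_sqr q) in lagrange.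
  replace (norm3 p * norm3 p * (norm3 q * norm3 q))
    with ((norm3 p * norm3 q) * (norm3 p * norm3 q)) in lagrange by ring.
  nra.
Qed.

Lemma dist3C (p q : pt3) : dist3 p q = dist3 q p.
Proof. unfold dist3; rewrite !norm3_dot; f_equal; pt3_ring. Qed.

Lemma dist3_xx (p : pt3) : dist3 p p = 0.
Proof.
  unfold dist3; rewrite norm3_dot.
  replace (dot3 (sub3 p p) (sub3 p p)) with 0 by pt3_ring; apply sqrt_0.
Qed.

Lemma dist3_ge0 (p q : pt3) : 0 <= dist3 p q.
Proof. apply norm3_ge0. Qed.

Lemma dist3_O3r (p : pt3) : dist3 p O3 = norm3 p.
Proof. unfold dist3; rewrite !norm3_dot; f_equal; pt3_ring. Qed.

Lemma dist3_O3l (p : pt3) : dist3 O3 p = norm3 p.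
Proof. now rewrite dist3C, dist3_O3r. Qed.

Lemma dist3_triangle (p q r : pt3) : dist3 p r <= dist3 p q + dist3 q r.
Proof.
  unfold dist3; set (u := sub3 p q); set (v := sub3 q r).
  assert (expand : dot3 (sub3 p r) (sub3 p r) = dot3 u u + 2 * dot3 u v + dot3 v v)
    by (unfold u, v; pt3_ring).
  pose proof (dot3_cauchy u v); pose proof (norm3_ge0 u); pose proof (norm3_ge0 v).
  apply norm3_le_iff; [lra|]; rewrite expand, <- (norm3_sqr u), <- (norm3_sqr v); nra.
Qed.

Lemma dist3_lerp3 (p q : pt3) (t u : R) :
  dist3 (lerp3 p q t) (lerp3 p q u) = Rabs (t - u) * dist3 q p.
Proof.
  unfold dist3; rewrite <- norm3_scal3, !norm3_dot; f_equal; pt3_ring.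
Qed.

Lemma lerp3_0 (p q : pt3) : lerp3 p q 0 = p.
Proof. pt3_ring. Qed.

Lemma lerp3_1 (p q : pt3) : lerp3 p q 1 = q.
Proof. pt3_ring. Qed.

Lemma dist3_lerp3_l (p q : pt3) (t : R) :
  0 <= t -> dist3 (lerp3 p q t) p = t * dist3 p q.
Proof.
  intros ht; rewrite <- (lerp3_0 p q) at 2.
  rewrite dist3_lerp3, dist3C, Rabs_right by lra; ring.
Qed.

Lemma dist3_lerp3_r (p q : pt3) (t : R) :
  t <= 1 -> dist3 (lerp3 p q t) q = (1 - t) * dist3 p q.
Proof.
  intros ht; rewrite <- (lerp3_1 p q) at 2.
  rewrite dist3_lerp3, dist3C, Rabs_left1 by lra; ring.
Qed.

Lemma in_ballE (p : pt3) (B : ball3) : in_ball p B = (dist3 p (center B) <= radius B).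
Proof. reflexivity. Qed.

Lemma balls_intersect_of_dist3_le (B B' : ball3) :
  0 < radius B -> 0 < radius B' ->
  dist3 (center B) (center B') <= radius B + radius B' -> balls_intersect B B'.
Proof.
  intros hr hr' hd; set (t := radius B / (radius B + radius B')).
  assert (htr : t * (radius B + radius B') = radius B) by (unfold t; field; lra).
  assert (ht : 0 <= t <= 1) by nra.
  pose proof (dist3_ge0 (center B) (center B')).
  exists (lerp3 (center B) (center B') t); rewrite !in_ballE; split.
  - rewrite dist3_lerp3_l by lra; nra.
  - rewrite dist3_lerp3_r by lra; nra.
Qed.

Lemma inner_ball (c y : pt3) (rho h : R) :
  0 < h <= rho -> dist3 y c <= rho ->
  exists w, dist3 w y <= h /\ dist3 w c + h <= rho.
Proof.
  intros hh hy; set (t := h / rho).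
  assert (htr : t * rho = h) by (unfold t; field; lra).
  assert (ht : 0 <= t <= 1) by nra.
  pose proof (dist3_ge0 y c).
  exists (lerp3 c y (1 - t)); split.
  - rewrite dist3_lerp3_r, dist3C by lra; nra.
  - rewrite dist3_lerp3_l, dist3C by lra; nra.
Qed.

Lemma balls_intersect_of_inner (B B' : ball3) (w w' : pt3) (h : R) :
  0 < h -> dist3 w (center B) + h <= radius B -> dist3 w' (center B') + h <= radius B' ->
  dist3 w w' <= 2 * h -> balls_intersect B B'.
Proof.
  intros hh hw hw' hd.
  destruct (balls_intersect_of_dist3_le (w, h) (w', h)) as [p [hp hp']];
    cbn [center radius fst snd]; try lra.
  rewrite in_ballE in *; cbn [center radius fst snd] in *.
  exists p; split; rewrite in_ballE.
  - pose proof (dist3_triangle p w (center B)); lra.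
  - pose proof (dist3_triangle p w' (center B')); lra.
Qed.

Lemma ray_ball_dist3 (x c : pt3) (r rho t : R) :
  0 <= t <= 1 -> 0 <= r -> norm3 x <= r + rho / 2 -> norm3 x <= 3 * r ->
  dist3 (lerp3 O3 x t) c <= rho -> rho < norm3 c -> dist3 x c <= r + rho.
Proof.
  (* rho^2 < |c|^2 and |t x - c|^2 <= rho^2 give 2 x.c >= t |x|^2, whence
     |x - c|^2 <= (1 - t) |x|^2 + rho^2 <= r^2 + 2 r rho + rho^2. *)
  intros ht hr hX1 hX3 hin hout.
  assert (hrho : 0 <= rho) by (pose proof (dist3_ge0 (lerp3 O3 x t) c); lra).
  set (X := norm3 x) in *; set (a := dot3 x c); set (N := dot3 c c).
  assert (hX : 0 <= X) by apply norm3_ge0.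
  assert (hXX : dot3 x x = X * X) by (symmetry; apply norm3_sqr).
  assert (hN : rho * rho < N).
  { unfold N; rewrite <- norm3_sqr; pose proof (norm3_ge0 c); nra. }
  assert (hin2 : t * t * (X * X) - 2 * t * a + N <= rho * rho).
  { rewrite <- hXX; unfold a, N.
    apply norm3_le_iff in hin; [|lra]; revert hin; unfold dist3; pt3_destruct; simpl.
    intro; nra. }
  assert (hta : t * (X * X) <= 2 * a).
  { assert (0 < t) by (destruct (Rle_lt_or_eq_dec 0 t (proj1 ht)) as [|<-]; [easy|nra]).
    nra. }
  assert (hXr : X * X <= r * r + 2 * r * rho) by nra.
  apply norm3_le_iff; [lra|].
  replace (dot3 (sub3 x c) (sub3 x c)) with (X * X - 2 * a + N)
    by (rewrite <- hXX; unfold a, N; pt3_ring).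
  nra.
Qed.

Definition cbrt_unit_vol : R := Rpower (4 / 3 * PI) (1 / 3).

Lemma cbrt_unit_vol_gt0 : 0 < cbrt_unit_vol.
Proof. apply exp_pos. Qed.

Lemma cbrt_vol (B : ball3) : 0 < radius B -> cbrt (vol B) = cbrt_unit_vol * radius B.
Proof.
  intros hr; pose proof PI_RGT_0; unfold cbrt, vol, cbrt_unit_vol.
  rewrite <- Rpower_mult_distr, <- Rpower_pow, Rpower_mult by (try apply pow_lt; lra).
  replace (INR 3 * (1 / 3)) with 1 by (simpl; field).
  now rewrite Rpower_1.
Qed.

Lemma balls_intersect_sym (B B' : ball3) : balls_intersect B B' -> balls_intersect B' B.
Proof. intros (p & h & h'); now exists p. Qed.

Lemma balls_intersect_refl (B : ball3) : 0 <= radius B -> balls_intersect B B.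
Proof. intros hr; exists (center B); rewrite in_ballE, dist3_xx; split; lra. Qed.

Lemma pigeonhole_length {A K : Type} (f : A -> K) (s : R) (cells : list K) (l : list A) :
  NoDup l -> (forall a, In a l -> In (f a) cells) ->
  (forall k l', NoDup l' -> (forall a, In a l' -> In a l /\ f a = k) ->
     INR (length l') <= s) ->
  INR (length l) <= INR (length cells) * s.
Proof.
  revert l; induction cells as [|k cells IH]; intros l hnd hin hfib.
  - destruct l as [|a l]; [simpl; lra|destruct (hin a (or_introl eq_refl))].
  - set (P a := if excluded_middle_informative (f a = k) then true else false).
    rewrite <- (filter_length P l), plus_INR; simpl length; rewrite S_INR.
    assert (hP : forall a, P a = true <-> f a = k)
      by (intros a; unfold P; destruct excluded_middle_informative; easy).
    assert (fibre : INR (length (filter P l)) <= s).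
    { apply (hfib k); [now apply NoDup_filter|].
      intros a ha; apply filter_In in ha; rewrite <- hP; easy. }
    assert (rest : INR (length (filter (fun a => negb (P a)) l)) <= INR (length cells) * s).
    { apply IH; [now apply NoDup_filter| |].
      - intros a ha; apply filter_In in ha as [ha hk].
        destruct (hin a ha) as [e|]; [|easy].
        assert (hPa : P a = true) by (apply hP; now symmetry).
        now rewrite hPa in hk.
      - intros k' l' hnd' hl'; apply (hfib k' l' hnd').
        intros a ha; destruct (hl' a ha) as [hal hk']; apply filter_In in hal; easy. }
    lra.
Qed.

Definition cell (h : R) (p : pt3) : Z * Z * Z :=
  let '(x, y, z) := p in (Int_part (x / h), Int_part (y / h), Int_part (z / h)).

Definition zrange (M : nat) : list Z :=
  map (fun k => Z.of_nat k - Z.of_nat M - 1)%Z (seq 0 (2 * M + 2)).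

Definition cube (M : nat) : list (Z * Z * Z) :=
  list_prod (list_prod (zrange M) (zrange M)) (zrange M).

Lemma cube_length (M : nat) : length (cube M) = ((2 * M + 2) ^ 3)%nat.
Proof. unfold cube, zrange; rewrite !length_prod, length_map, length_seq; simpl; lia. Qed.

Lemma Int_part_bounds (t : R) (M : nat) :
  Rabs t <= INR M -> (- Z.of_nat M - 1 <= Int_part t <= Z.of_nat M)%Z.
Proof.
  intros ht; destruct (base_Int_part t) as [hlo hhi].
  pose proof (Rle_abs t); pose proof (Rle_abs (- t)); rewrite Rabs_Ropp in *.
  rewrite INR_IZR_INZ in ht; split.
  - apply le_IZR; rewrite minus_IZR, opp_IZR; lra.
  - apply Zlt_succ_le, lt_IZR; unfold Z.succ; rewrite plus_IZR; lra.
Qed.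

Lemma Int_part_eq (a b : R) : Int_part a = Int_part b -> Rabs (a - b) < 1.
Proof.
  intros e; destruct (base_Int_part a), (base_Int_part b); rewrite e in *.
  apply Rabs_def1; lra.
Qed.

Lemma cell_in_cube (h : R) (M : nat) (p : pt3) :
  0 < h -> norm3 p <= INR M * h -> In (cell h p) (cube M).
Proof.
  intros hh hp.
  assert (coord : forall t, Rabs t <= norm3 p -> In (Int_part (t / h)) (zrange M)).
  { intros t ht; apply in_map_iff; set (i := Int_part (t / h)).
    assert (hi : (- Z.of_nat M - 1 <= i <= Z.of_nat M)%Z).
    { apply Int_part_bounds; unfold Rdiv; rewrite Rabs_mult, Rabs_inv, (Rabs_right h) by lra.
      apply (Rmult_le_reg_r h); [easy|]; rewrite Rmult_assoc, Rinv_l by lra; lra. }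
    exists (Z.to_nat (i + Z.of_nat M + 1)); split; [lia|apply in_seq; lia]. }
  pose proof (norm3_ge0 p); rewrite norm3_dot in *.
  destruct p as [[x y] z]; simpl in *.
  assert (Rabs x <= sqrt (x * x + y * y + z * z) /\ Rabs y <= sqrt (x * x + y * y + z * z)
          /\ Rabs z <= sqrt (x * x + y * y + z * z)) as (hx & hy & hz).
  { repeat split; rewrite <- sqrt_Rsqr_abs; apply sqrt_le_1_alt; unfold Rsqr; nra. }
  unfold cube; apply in_prod; [apply in_prod|]; auto.
Qed.

Lemma dist3_le_of_cell_eq (h : R) (p q : pt3) :
  0 < h -> cell h p = cell h q -> dist3 p q <= 2 * h.
Proof.
  intros hh e; destruct p as [[x y] z], q as [[x' y'] z']; injection e as ex ey ez.
  assert (close : forall a b,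
            Int_part (a / h) = Int_part (b / h) -> (a - b) * (a - b) <= h * h).
  { intros a b hab; apply Int_part_eq in hab.
    replace (a / h - b / h) with ((a - b) / h) in hab by (field; lra).
    unfold Rdiv in hab; rewrite Rabs_mult, Rabs_inv, (Rabs_right h) in hab by lra.
    apply (Rmult_lt_compat_r h) in hab; [|easy].
    rewrite Rmult_assoc, Rinv_l, Rmult_1_r, Rmult_1_l in hab by lra.
    apply Rabs_def2 in hab; nra. }
  apply close in ex, ey, ez; unfold dist3; apply norm3_le_iff; [lra|]; simpl; nra.
Qed.

Lemma dist3_sub3 (p q z : pt3) : dist3 (sub3 p z) (sub3 q z) = dist3 p q.
Proof. unfold dist3; rewrite !norm3_dot; f_equal; pt3_ring. Qed.

Lemma margin_pos (z : pt3) (l : list ball3) :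
  (forall B, In B l -> ~ in_ball z B) ->
  exists d, 0 < d /\ forall B, In B l -> d <= dist3 z (center B) - radius B.
Proof.
  induction l as [|B l IH]; intros hout.
  - exists 1; split; [lra|intros B []].
  - destruct IH as (d & hd & hdl); [intros B' hB'; apply hout; now right|].
    assert (hB : radius B < dist3 z (center B)).
    { apply Rnot_le_lt; exact (hout B (or_introl eq_refl)). }
    exists (Rmin d (dist3 z (center B) - radius B)); split; [apply Rmin_pos; lra|].
    intros B' [<-|hB']; [apply Rmin_r|].
    apply (Rle_trans _ d); [apply Rmin_l|auto].
Qed.

Lemma approaching_balls_lists (F : ball3 -> Prop) (z : pt3) :
  (forall B, F B -> ~ in_ball z B) ->
  (forall d, 0 < d -> exists B y, F B /\ in_ball y B /\ dist3 y z < d) ->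
  forall m : nat, exists l, NoDup l /\ length l = m /\
    forall B, In B l -> F B /\ exists y, in_ball y B /\ dist3 y z <= 1.
Proof.
  intros hout happ; induction m as [|m (l & hnd & hlen & hl)].
  - exists nil; split; [constructor|split; [easy|intros B []]].
  - destruct (margin_pos z l) as (d & hd & hdl); [intros B hB; apply hout, hl, hB|].
    destruct (happ (Rmin d 1)) as (B & y & hB & hy & hyz); [apply Rmin_pos; lra|].
    pose proof (Rmin_l d 1); pose proof (Rmin_r d 1).
    exists (B :: l); split; [|split].
    + constructor; [|easy]; intros hin; specialize (hdl B hin).
      pose proof (dist3_triangle z y (center B)); rewrite dist3C in hyz.
      rewrite in_ballE in hy; lra.
    + simpl; now rewrite hlen.
    + intros B' [<-|hB']; [split; [easy|exists y; split; [easy|lra]]|now apply hl].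
Qed.

Lemma lub_approx (E : R -> Prop) (s eps : R) :
  is_lub E s -> 0 < eps -> exists t, E t /\ s - eps < t.
Proof.
  intros [hub hlub] heps; apply NNPP; intros hno.
  assert (s <= s - eps); [|lra].
  apply hlub; intros t ht; apply Rnot_lt_le; intros hlt; apply hno; now exists t.
Qed.

Lemma ball_subset_origin_of_le (B : ball3) (r : R) :
  norm3 (center B) + radius B <= r -> ball_subset_origin B r.
Proof.
  intros hB p hp; rewrite in_ballE in hp.
  pose proof (dist3_triangle p (center B) O3) as tri; rewrite !dist3_O3r in tri; lra.
Qed.

Lemma nat_ceil (x : R) : exists N : nat, x <= INR N.
Proof. destruct (INR_archimed 1 x) as [N hN]; [lra|exists N; lra]. Qed.

Lemma pow3_le_pow6_bound (m kappa sigma L : R) :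
  0 < kappa -> 0 <= sigma -> 0 <= m -> 1 <= L -> m * kappa <= L ->
  m ^ 3 * sigma <= 4 * PI / 3 * sigma * L ^ 6 * / kappa ^ 3.
Proof.
  intros hk hs hm hL hmL.
  assert (hk3 : 0 < / kappa ^ 3) by (apply Rinv_0_lt_compat, pow_lt, hk).
  assert (hm3 : m ^ 3 = (m * kappa) ^ 3 * / kappa ^ 3)
    by (rewrite Rpow_mult_distr; field; lra).
  assert (h3 : (m * kappa) ^ 3 <= L ^ 3) by (apply pow_incr; nra).
  assert (h6 : L ^ 3 <= L ^ 6).
  { replace (L ^ 6) with (L ^ 3 * L ^ 3) by ring; pose proof (pow_R1_Rle L 3 hL); nra. }
  assert (hpi : 1 <= 4 * PI / 3) by (pose proof PI2_3_2; lra).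
  assert (hL6 : 0 <= L ^ 6 * / kappa ^ 3 * sigma)
    by (repeat apply Rmult_le_pos; try apply pow_le; lra).
  rewrite hm3.
  apply (Rle_trans _ (L ^ 6 * / kappa ^ 3 * sigma)).
  - apply Rmult_le_compat_r, Rmult_le_compat_r; lra.
  - replace (4 * PI / 3 * sigma * L ^ 6 * / kappa ^ 3)
      with (4 * PI / 3 * (L ^ 6 * / kappa ^ 3 * sigma)) by ring; nra.
Qed.

Section Cover.

Variables (sigma eta : R) (C : ball3 -> Prop).
Hypothesis cover : is_cover sigma eta C.

Lemma cover_radius_ge1 (B : ball3) : C B -> 1 <= radius B.
Proof.
  destruct cover as (_ & hvol & _); intros hB; specialize (hvol B hB).
  unfold vol in hvol; pose proof PI_RGT_0.
  assert (h3 : 1 <= radius B ^ 3) by nra.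
  destruct (Rle_or_lt 1 (radius B)) as [|hlt]; [easy|].
  destruct (Rle_or_lt (radius B) 0); simpl in h3; nra.
Qed.

Lemma cover_radius_le (B B' : ball3) :
  C B -> C B' -> balls_intersect B B' -> radius B <= eta * radius B'.
Proof.
  intros hB hB' hi; pose proof (cover_radius_ge1 B hB); pose proof (cover_radius_ge1 B' hB').
  destruct cover as (_ & _ & _ & hratio); destruct (hratio B B' hB hB' hi) as [_ hle].
  rewrite !cbrt_vol in hle by lra; pose proof cbrt_unit_vol_gt0.
  replace (cbrt_unit_vol * radius B / (cbrt_unit_vol * radius B'))
    with (radius B / radius B') in hle by (field; lra).
  apply Rmult_le_reg_r with (/ radius B'); [apply Rinv_0_lt_compat; lra|].
  rewrite Rmult_assoc, Rinv_r by lra; lra.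
Qed.

Lemma cover_origin_ball : exists B0, C B0 /\ in_ball O3 B0.
Proof. now destruct cover as [hcov _]. Qed.

Lemma cover_eta_ge1 : 1 <= eta.
Proof.
  destruct cover_origin_ball as (B & hB & _); pose proof (cover_radius_ge1 B hB).
  pose proof (cover_radius_le B B hB hB (balls_intersect_refl B ltac:(lra))); nra.
Qed.

Lemma cover_clique_le (l : list ball3) :
  NoDup l -> (forall B, In B l -> C B) ->
  (forall B B', In B l -> In B' l -> balls_intersect B B') -> INR (length l) <= sigma.
Proof.
  intros hnd hC hi; destruct cover as (_ & _ & hdeg & _).
  destruct l as [|B l].
  - (* sigma >= 1, since a ball of the cover meets itself *)
    destruct cover_origin_ball as (B & hB & _); pose proof (cover_radius_ge1 B hB).
    apply (Rle_trans _ (INR (length (B :: nil)))); [simpl; lra|].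
    apply (hdeg B hB); [repeat constructor; easy|].
    intros B' [<-|[]]; split; [easy|apply balls_intersect_refl; lra].
  - apply (hdeg B (hC B (or_introl eq_refl))); [easy|].
    intros B' hB'; split; [now apply hC|apply hi; simpl; auto].
Qed.

Lemma cover_count_grid (z : pt3) (h : R) (M : nat) (l : list ball3) :
  0 < h -> NoDup l ->
  (forall B, In B l -> C B /\
     exists w, dist3 w (center B) + h <= radius B /\ dist3 w z <= INR M * h) ->
  INR (length l) <= INR (2 * M + 2) ^ 3 * sigma.
Proof.
  intros hh hnd hl.
  set (inner B w := dist3 w (center B) + h <= radius B /\ dist3 w z <= INR M * h).
  set (wB B := epsilon (inhabits O3) (inner B)).
  assert (hw : forall B, In B l -> inner B (wB B))
    by (intros B hB; apply epsilon_spec, hl, hB).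
  rewrite <- pow_INR, <- cube_length.
  apply (pigeonhole_length (fun B => cell h (sub3 (wB B) z))); [easy| |].
  - intros B hB; apply cell_in_cube; [easy|apply hw, hB].
  - intros k l' hnd' hl'; apply cover_clique_le; [easy| |].
    + intros B hB; apply hl, hl', hB.
    + intros B B' hB hB'; destruct (hl' B hB) as [hBl hk], (hl' B' hB') as [hBl' hk'].
      apply (balls_intersect_of_inner B B' (wB B) (wB B') h hh); try apply hw; auto.
      rewrite <- (dist3_sub3 _ _ z); apply dist3_le_of_cell_eq; [easy|congruence].
Qed.

Lemma cover_count_near (z : pt3) (l : list ball3) :
  NoDup l -> (forall B, In B l -> C B /\ exists y, in_ball y B /\ dist3 y z <= 1) ->
  INR (length l) <= 512 * sigma.
Proof.
  intros hnd hl; replace 512 with (INR (2 * 3 + 2) ^ 3) by (simpl; ring).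
  apply (cover_count_grid z (/ 2)); [lra|easy|].
  intros B hB; destruct (hl B hB) as (hC & y & hy & hyz); split; [easy|].
  pose proof (cover_radius_ge1 B hC).
  destruct (inner_ball (center B) y (radius B) (/ 2)) as (w & hwy & hwc); [lra|easy|].
  exists w; split; [easy|].
  pose proof (dist3_triangle w y z); simpl; lra.
Qed.

Lemma cover_contains_near (z : pt3) :
  exists d, 0 < d /\ forall B y, C B -> in_ball y B -> dist3 y z < d -> in_ball z B.
Proof.
  destruct (classic (exists d, 0 < d /\
    forall B y, C B -> in_ball y B -> dist3 y z < d -> in_ball z B)) as [|hno]; [easy|].
  exfalso.
  assert (happ : forall d, 0 < d ->
    exists B y, (C B /\ ~ in_ball z B) /\ in_ball y B /\ dist3 y z < d).
  { intros d hd; apply NNPP; intros hnot; apply hno; exists d; split; [easy|].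
    intros B y hB hy hyz; apply NNPP; intros hz; apply hnot; now exists B, y. }
  destruct (INR_archimed 1 (512 * sigma)) as [m hm]; [lra|].
  destruct (approaching_balls_lists _ z (fun B hB => proj2 hB) happ m)
    as (l & hnd & hlen & hl).
  assert (INR (length l) <= 512 * sigma).
  { apply (cover_count_near z l hnd); intros B hB.
    destruct (hl B hB) as [[hC _] hy]; now split. }
  rewrite hlen in *; lra.
Qed.

Lemma cover_segment_propagate (a b : pt3) (small : ball3 -> Prop) :
  (forall B, small B -> C B) ->
  (forall t B B', 0 <= t <= 1 -> C B' -> in_ball (lerp3 a b t) B' ->
     small B -> balls_intersect B B' -> small B') ->
  (exists B, small B /\ in_ball a B) -> exists B, small B /\ in_ball b B.
Proof.
  intros hSC hspread [B0 [hS0 ha]].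
  set (E t := 0 <= t <= 1 /\ exists B, small B /\ in_ball (lerp3 a b t) B).
  assert (hE0 : E 0) by (split; [lra|exists B0; now rewrite lerp3_0]).
  destruct (completeness E) as (ts & hub & hlub);
    [exists 1; now intros t [ht _]|now exists 0|].
  assert (hts : 0 <= ts <= 1) by (split; [now apply hub|apply hlub; now intros t [ht _]]).
  set (z := lerp3 a b ts).
  destruct (cover_contains_near z) as (d & hd & hnear).
  pose proof (dist3_ge0 b a); set (D := dist3 b a) in *.
  set (step := d / (D + 1)).
  assert (hstep : 0 < step) by (unfold step; apply Rdiv_pos_pos; lra).
  assert (hclose : forall t, Rabs (t - ts) < step -> dist3 (lerp3 a b t) z < d).
  { intros t ht; unfold z; rewrite dist3_lerp3; fold D.
    apply (Rle_lt_trans _ (Rabs (t - ts) * (D + 1))); [pose proof (Rabs_pos (t - ts)); nra|].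
    replace d with (step * (D + 1)) by (unfold step; field; lra).
    apply Rmult_lt_compat_r; lra. }
  destruct (lub_approx E ts step (conj hub hlub) hstep) as (t & [ht (Bs & hBs & hin)] & hlt).
  assert (hzBs : in_ball z Bs).
  { apply (hnear Bs (lerp3 a b t)); auto.
    apply hclose; assert (t <= ts) by (apply hub; split; [easy|now exists Bs]).
    apply Rabs_def1; lra. }
  set (t' := Rmin (ts + step / 2) 1).
  assert (ht' : ts <= t' <= 1 /\ Rabs (t' - ts) < step).
  { unfold t'; pose proof (Rmin_l (ts + step / 2) 1); pose proof (Rmin_r (ts + step / 2) 1).
    assert (ts <= Rmin (ts + step / 2) 1) by (apply Rmin_glb; lra).
    split; [lra|apply Rabs_def1; lra]. }
  destruct cover as [hcov _]; destruct (hcov (lerp3 a b t')) as (B' & hB' & hin').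
  assert (hS' : small B').
  { apply (hspread t' Bs B'); auto; [lra|].
    exists z; split; [easy|apply (hnear B' (lerp3 a b t')); auto; apply hclose; easy]. }
  assert (hle : t' <= ts) by (apply hub; split; [lra|now exists B']).
  assert (e1 : t' = 1) by (revert hle; unfold t', Rmin; destruct Rle_dec; lra).
  exists B'; split; [easy|]; now rewrite e1, lerp3_1 in hin'.
Qed.

Variable B0 : ball3.
Hypotheses (hB0 : C B0) (hO : in_ball O3 B0).

Lemma cover_radius_bound (B : ball3) (p : pt3) (n : R) :
  eta ^ 3 * radius B0 <= n -> C B -> in_ball p B -> norm3 p <= 2 * n ->
  radius B <= (4 * eta ^ 2 + 1) * n.
Proof.
  intros hn hB hp hpn; apply Rnot_lt_le; intros hbig.
  pose proof cover_eta_ge1 as he.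
  pose proof (cover_radius_ge1 B0 hB0) as hr0.
  assert (he2 : 1 <= eta ^ 2) by (simpl; nra).
  assert (he3 : eta <= eta ^ 3) by (simpl; nra).
  assert (her0 : radius B0 <= eta * radius B0 <= n) by (split; nra).
  assert (hnr : n <= radius B) by nra.
  assert (hnx : norm3 (center B) <= radius B + 2 * n).
  { pose proof (dist3_triangle (center B) p O3) as tri; rewrite !dist3_O3r in tri.
    rewrite in_ballE, dist3C in hp; lra. }
  set (small B' := C B' /\ radius B' <= eta * radius B0 + 4 * n).
  assert (hspread : forall t B1 B', 0 <= t <= 1 -> C B' ->
            in_ball (lerp3 O3 (center B) t) B' -> small B1 -> balls_intersect B1 B' ->
            small B').
  { intros t B1 B' ht hB' hin [hB1 hS1] hi; split; [easy|]; apply Rnot_lt_le; intros hrho.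
    assert (hout : radius B' < norm3 (center B')).
    { apply Rnot_le_lt; intros hO'; rewrite <- dist3_O3l in hO'.
      assert (radius B' <= eta * radius B0); [|lra].
      apply cover_radius_le; auto; now exists O3. }
    assert (hBB' : balls_intersect B B').
    { apply balls_intersect_of_dist3_le; [lra|lra|].
      apply (ray_ball_dist3 (center B) (center B') (radius B) (radius B') t); auto; lra. }
    pose proof (cover_radius_le B B' hB hB' hBB').
    pose proof (cover_radius_le B' B1 hB' hB1 (balls_intersect_sym B1 B' hi)).
    assert (radius B <= eta ^ 2 * (eta * radius B0 + 4 * n)) by (simpl; nra).
    simpl in *; nra. }
  destruct (cover_segment_propagate O3 (center B) small) as (Bs & [hBs hSs] & hxs);
    [now intros B' [hB' _]|exact hspread|exists B0; split; [split; [easy|lra]|easy]|].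
  assert (hSB : small B); [|destruct hSB; simpl in *; nra].
  apply (hspread 1 Bs B); [lra|easy| |now split|].
  - rewrite lerp3_1, in_ballE, dist3_xx; lra.
  - exists (center B); split; [easy|rewrite in_ballE, dist3_xx; lra].
Qed.

Lemma annulus_ball_bounds (B : ball3) (n : R) :
  (eta ^ 3 + 2 * eta) * radius B0 <= n -> C B -> meets_annulus n B ->
  n / 2 <= norm3 (center B) /\ radius B <= (4 * eta ^ 2 + 1) * n /\
  norm3 (center B) <= radius B + 2 * n.
Proof.
  intros hn hB (p & hp & hp1 & hp2).
  pose proof cover_eta_ge1 as he.
  pose proof (cover_radius_ge1 B0 hB0) as hr0.
  assert (he3 : eta ^ 3 * radius B0 <= n /\ 2 * eta * radius B0 <= n)
    by (assert (0 <= eta ^ 3) by (apply pow_le; lra); split; nra).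
  pose proof (dist3_triangle (center B) p O3) as tri1.
  pose proof (dist3_triangle p (center B) O3) as tri2.
  rewrite !dist3_O3r in tri1, tri2; rewrite in_ballE in hp; rewrite dist3C in tri1.
  split; [|split; [|lra]].
  2: apply (cover_radius_bound B p n); [lra|easy|exact hp|lra].
  apply Rnot_lt_le; intros hx.
  assert (radius B <= eta * radius B0); [|lra].
  apply (cover_radius_le B B0 hB hB0).
  exists O3; split; [|easy]; rewrite in_ballE, dist3_O3l; lra.
Qed.

Lemma annulus_count (kappa R0 n : R) (M : nat) :
  0 < kappa -> (eta ^ 3 + 2 * eta) * radius B0 <= n -> 2 * R0 <= n ->
  (forall B, C B -> R0 <= norm3 (center B) -> cbrt (vol B) >= kappa * norm3 (center B)) ->
  (4 * eta ^ 2 + 3) * 2 * cbrt_unit_vol / kappa <= INR M ->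
  at_most (fun B => C B /\ meets_annulus n B) (INR (2 * M + 2) ^ 3 * sigma).
Proof.
  intros hk hn hR0 hkappa hM l hnd hl.
  pose proof cover_eta_ge1 as he.
  pose proof (cover_radius_ge1 B0 hB0) as hr0.
  pose proof cbrt_unit_vol_gt0 as hc.
  assert (hn1 : 1 <= n) by (assert (0 <= eta ^ 3) by (apply pow_le; lra); nra).
  set (h := kappa * n / (2 * cbrt_unit_vol)).
  assert (hh : h * (2 * cbrt_unit_vol) = kappa * n) by (unfold h; field; lra).
  assert (hpos : 0 < h) by nra.
  apply (cover_count_grid O3 h M l hpos hnd).
  intros B hBl; destruct (hl B hBl) as [hB hm]; split; [easy|].
  destruct (annulus_ball_bounds B n hn hB hm) as (hx1 & hr & hx2).
  pose proof (cover_radius_ge1 B hB).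
  exists (center B); rewrite dist3_xx, dist3_O3r; split.
  - pose proof (hkappa B hB ltac:(lra)) as hv; rewrite cbrt_vol in hv by lra.
    assert (cbrt_unit_vol * h <= cbrt_unit_vol * radius B) by nra; nra.
  - assert (hQ : (4 * eta ^ 2 + 3) * n = (4 * eta ^ 2 + 3) * 2 * cbrt_unit_vol / kappa * h)
      by (unfold h; field; lra).
    assert (0 <= eta ^ 2) by (apply pow2_ge_0).
    apply (Rmult_le_compat_r h) in hM; lra.
Qed.

End Cover.

Theorem lemma5p5 :
  forall (eta kappa : R), 0 < eta -> 0 < kappa ->
  exists L : R, 2 <= L /\
  forall (sigma : R) (C : ball3 -> Prop),
    0 < sigma ->
    is_cover sigma eta C ->
    (exists R0 : R, forall B, C B -> R0 <= norm3 (center B) ->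
        cbrt (vol B) >= kappa * norm3 (center B)) ->
    exists N : nat, forall n : nat, (N <= n)%nat ->
      (forall B, C B -> meets_annulus (INR n) B ->
         ball_subset_origin B (L * INR n) /\ norm3 (center B) >= / L * INR n) /\
      at_most (fun B => C B /\ meets_annulus (INR n) B)
              (4 * PI / 3 * sigma * L ^ 6 * / kappa ^ 3).
Proof.
  intros eta kappa heta hkappa.
  destruct (nat_ceil ((4 * eta ^ 2 + 3) * 2 * cbrt_unit_vol / kappa)) as [M hM].
  pose proof (pos_INR (2 * M + 2)) as hm.
  assert (hmk : 0 <= INR (2 * M + 2) * kappa) by (apply Rmult_le_pos; lra).
  assert (he2 : 0 <= eta ^ 2) by apply pow2_ge_0.
  (* 8 eta^2 + 4 bounds (|x_B| + r_B) / n; the last term absorbs the grid count *)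
  exists (8 * eta ^ 2 + 4 + INR (2 * M + 2) * kappa); split; [lra|].
  intros sigma C hsigma cover [R0 hR0].
  destruct (cover_origin_ball sigma eta C cover) as (B0 & hB0 & hO).
  destruct (nat_ceil (Rmax ((eta ^ 3 + 2 * eta) * radius B0) (2 * R0))) as [N hN].
  exists N; intros n hn; apply le_INR in hn; pose proof (pos_INR n).
  pose proof (Rmax_l ((eta ^ 3 + 2 * eta) * radius B0) (2 * R0)).
  pose proof (Rmax_r ((eta ^ 3 + 2 * eta) * radius B0) (2 * R0)).
  split.
  - intros B hB hmeet.
    destruct (annulus_ball_bounds sigma eta C cover B0 hB0 hO B (INR n)) as (h1 & h2 & h3);
      [lra|easy|easy|].
    split; [apply ball_subset_origin_of_le; nra|].
    apply Rle_ge, (Rle_trans _ (/ 2 * INR n)); [|lra].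
    apply Rmult_le_compat_r; [easy|apply Rinv_le_contravar; lra].
  - intros l hnd hl; eapply Rle_trans.
    + apply (annulus_count sigma eta C cover B0 hB0 hO kappa R0 (INR n) M); eauto; lra.
    + apply pow3_le_pow6_bound; lra.
Qed.
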